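(* Two semifactor sets of a wide ACI-matrix over a field $\mathbb{F}$ cannot be disjoint.
   Context: Let $\mathbb{F}$ be a field. An ACI-matrix is a matrix with entries in $\mathbb{F}[x_1,\dots,x_k]$ whose entries are polynomials of degree at most one and such that no indeterminate appears in two different columns. It is wide if it has more columns than rows. A completion is an assignment of values in $\mathbb{F}$ to all indeterminates; $\mathrm{maxRank}(N)$ is the maximum rank of a completion. ACI-matrices (and blocks) of size $0\times q$ ($q>0$, wide degenerate), $p\times 0$ ($p>0$, tall degenerate) and $0\times0$ (void) are allowed. $N$ is FRmR if $\mathrm{maxRank}(N)=\mathrm{rows}(N)$, FCmR if $\mathrm{maxRank}(N)=\mathrm{cols}(N)$; by convention tall degenerate is FRmR, wide degenerate is FCmR, void is both. For an $m\times n$ block matrix $\begin{bmatrix} A & B\\ 0 & C\end{bmatrix}$ with lower-left $r\times s$ zero block, the zero block is Medium if $r+s=\max\{m,n\}$. For $F=\{f_1<\dots<f_s\}\subseteq\{1,\dots,n\}$ with complement $\{g_1<\dots<g_{n-s}\}$, $Q_F$ is the $n\times n$ permutation matrix such that $MQ_F$ has as columns $f_1,\dots,f_s,g_1,\dots,g_{n-s}$ of $M$ in that order. For an $m\times n$ ACI-matrix $M$, $F$ is a semifactor set of $M$ if there is a nonsingular constant $m\times m$ matrix $R$ with $RMQ_F=\begin{bmatrix} A & B\\ 0 & C\end{bmatrix}$, where $A$ has $\#F$ columns, the zero block is Medium, $A$ is FRmR and $C$ is FCmR. *)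

From HB Require Import structures.
From mathcomp Require Import all_boot all_order all_algebra.
Set Implicit Arguments. Unset Strict Implicit. Unset Printing Implicit Defensive.
Import GRing.Theory.
Local Open Scope ring_scope.

(* An m x n ACI-matrix over F in the indeterminates x_0,...,x_(k-1).
   Every entry is a polynomial of degree at most one, i.e. uniquely written as
   c + \sum_l a_l x_l ; we store the constant parts [aconst] and, for every
   indeterminate x_l, the matrix [acoef l] of its coefficients. *)
Record aci (F : fieldType) (k m n : nat) := ACI {
  aconst : 'M[F]_(m, n);
  acoef : 'I_k -> 'M[F]_(m, n) }.

Definition is_aci (F : fieldType) k m n (M : aci F k m n) : Prop :=
  forall (l : 'I_k) (i1 i2 : 'I_m) (j1 j2 : 'I_n),
    acoef M l i1 j1 != 0 -> acoef M l i2 j2 != 0 -> j1 = j2.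

Definition completion (F : fieldType) k m n (M : aci F k m n) (v : 'I_k -> F)
  : 'M[F]_(m, n) := aconst M + \sum_(l < k) v l *: acoef M l.

Definition is_maxRank (F : fieldType) k m n (M : aci F k m n) (r : nat) : Prop :=
  (exists v, \rank (completion M v) = r) /\
  (forall v, (\rank (completion M v) <= r)%N).

Definition FRmR (F : fieldType) k m n (M : aci F k m n) : Prop :=
  is_maxRank M m \/ n = 0%N.
Definition FCmR (F : fieldType) k m n (M : aci F k m n) : Prop :=
  is_maxRank M n \/ m = 0%N.

Definition aci_transform (F : fieldType) k m n (R : 'M[F]_m) (M : aci F k m n)
  (Q : 'M[F]_n) : aci F k m n :=
  ACI (R *m aconst M *m Q) (fun l => R *m acoef M l *m Q).

Definition aci_sub (F : fieldType) k m n p q (f : 'I_p -> 'I_m) (g : 'I_q -> 'I_n)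
  (M : aci F k m n) : aci F k p q :=
  ACI (mxsub f g (aconst M)) (fun l => mxsub f g (acoef M l)).

Definition col_order n (S : {set 'I_n}) (j : 'I_n) : 'I_n :=
  nth j (enum S ++ enum (~: S)) j.

Definition Q_F (F : fieldType) n (S : {set 'I_n}) : 'M[F]_n :=
  \matrix_(i, j) ((i == col_order S j)%:R : F).

Lemma card_set_ord_le n (S : {set 'I_n}) : (#|S| <= n)%N.
Proof. by rewrite -[X in (_ <= X)%N](card_ord n) max_card. Qed.

Lemma shift_ord_proof p n (j : 'I_(n - p)) : (p + j < n)%N.
Proof. by have := ltn_ord j; rewrite ltn_subRL. Qed.

Definition shift_ord p n (j : 'I_(n - p)) : 'I_n := Ordinal (shift_ord_proof j).

(* F is a semifactor set of M: R M Q_F = [A B; 0 C], with A of #F columns and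
   p rows, zero block of size (m - p) x #F which is Medium, A FRmR, C FCmR. *)
Definition semifactor (F : fieldType) k m n (M : aci F k m n) (S : {set 'I_n}) : Prop :=
  exists (R : 'M[F]_m) (p : nat) (hp : (p <= m)%N),
    R \in unitmx /\
    ((m - p) + #|S| = maxn m n)%N /\
    let N := aci_transform R M (Q_F F S) in
    (forall (i : 'I_(m - p)) (j : 'I_#|S|),
        aconst N (shift_ord i) (widen_ord (card_set_ord_le S) j) = 0 /\
        forall l, acoef N l (shift_ord i) (widen_ord (card_set_ord_le S) j) = 0) /\
    FRmR (aci_sub (widen_ord hp) (widen_ord (card_set_ord_le S)) N) /\
    FCmR (aci_sub (@shift_ord p m) (@shift_ord #|S| n) N).

From HB Require Import structures.
From mathcomp Require Import all_boot all_order all_algebra.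
From mathcomp Require Import zify.
Set Implicit Arguments. Unset Strict Implicit. Unset Printing Implicit Defensive.
Import GRing.Theory.
Local Open Scope ring_scope.

(* If S1 and S2 were disjoint, take a completion X at which the block C1 of the
   S1-decomposition has full column rank. The columns of S2 are columns of C1,
   so they are independent in X. But the S2-decomposition shows that, at every
   completion, these #|S2| columns become zero below row p2 after an invertible
   row operation, and Medium with m < n gives p2 = #|S2| - (n - m) < #|S2|. *)

Section Completion.
Variables (F : fieldType) (k m n : nat).

Lemma completion_transform (R : 'M[F]_m) (M : aci F k m n) (Q : 'M_n) v :
  completion (aci_transform R M Q) v = R *m completion M v *m Q.
Proof.
rewrite /completion /= mulmxDr mulmxDl mulmx_sumr mulmx_suml; congr (_ + _).
by apply: eq_bigr => l _; rewrite -scalemxAr -scalemxAl.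
Qed.

Lemma completion_sub p q (f : 'I_p -> 'I_m) (g : 'I_q -> 'I_n)
    (M : aci F k m n) v :
  completion (aci_sub f g M) v = mxsub f g (completion M v).
Proof.
apply/matrixP => i j; rewrite !mxE !summxE; congr (_ + _).
by apply: eq_bigr => l _; rewrite !mxE.
Qed.

Lemma completion_entry_eq0 (M : aci F k m n) i j v :
  aconst M i j = 0 -> (forall l, acoef M l i j = 0) -> completion M v i j = 0.
Proof.
move=> c0 a0; rewrite mxE summxE c0 add0r big1 // => l _.
by rewrite mxE a0 mulr0.
Qed.

End Completion.

Section ColOrder.
Variables (n : nat) (S : {set 'I_n}).

Lemma col_orderE x0 j : col_order S j = nth x0 (enum S ++ enum (~: S)) j.
Proof.
by rewrite /col_order (set_nth_default x0) // size_cat -!cardE cardsC card_ord.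
Qed.

Lemma col_order_widen (j : 'I_#|S|) :
  col_order S (widen_ord (card_set_ord_le S) j) = enum_val j.
Proof.
rewrite (col_orderE (enum_val j)) nth_cat -cardE /= ltn_ord.
by rewrite {2}/enum_val; apply: set_nth_default; rewrite -cardE.
Qed.

Lemma col_order_shift_onto c :
  c \notin S -> exists j : 'I_(n - #|S|), col_order S (shift_ord j) = c.
Proof.
move=> cS; have ltc : (index c (enum (~: S)) < n - #|S|)%N.
  have: (index c (enum (~: S)) < #|~: S|)%N.
    by rewrite cardE index_mem mem_enum in_setC.
  by have := cardsC S; rewrite card_ord; lia.
exists (Ordinal ltc); rewrite (col_orderE c) nth_cat /= -cardE ltnNge leq_addr.
by rewrite /= addKn nth_index // mem_enum in_setC.
Qed.

Lemma mulmx_Q_F (F : fieldType) m (X : 'M[F]_(m, n)) :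
  X *m Q_F F S = colsub (col_order S) X.
Proof.
apply/matrixP => i j; rewrite !mxE (bigD1 (col_order S j)) //= big1 ?addr0.
  by rewrite !mxE eqxx mulr1.
by move=> t ht; rewrite !mxE (negbTE ht) mulr0.
Qed.

End ColOrder.

Section ColsubRank.
Variable F : fieldType.

Lemma mxrank_colsub1 n q (h : 'I_q -> 'I_n) :
  injective h -> \rank (colsub h (1%:M : 'M[F]_n)) = q.
Proof.
move=> inj_h; apply/eqP; rewrite eqn_leq rank_leq_col /=.
have id_q : rowsub h 1%:M *m colsub h 1%:M = 1%:M :> 'M[F]_q.
  by apply/matrixP => i j; rewrite mulmx_colsub mulmx1 !mxE (inj_eq inj_h).
by rewrite -{1}(mxrank1 F q) -id_q mxrankM_maxr.
Qed.

Lemma mxrank_colsub_full m n q (A : 'M[F]_(m, n)) (h : 'I_q -> 'I_n) :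
  row_full A -> injective h -> \rank (colsub h A) = q.
Proof.
move=> fullA inj_h.
by rewrite -[A]mulmx1 -mulmx_colsub (eqmxMfull _ fullA) mxrank_colsub1.
Qed.

Lemma mxrank_le_zero_bottom_rows m q p (A : 'M[F]_(m, q)) :
  (p <= m)%N -> (forall i : 'I_(m - p), row (shift_ord i) A = 0) ->
  (\rank A <= p)%N.
Proof.
move=> le_pm A0; have -> : A = pid_mx p *m A.
  apply/matrixP => i j; rewrite mxE (bigD1 i) //= big1 ?addr0; last first.
    by move=> t ti; rewrite mxE val_eqE eq_sym (negbTE ti) mul0r.
  rewrite mxE eqxx /=; case: ltnP => [_ | le_pi]; first by rewrite mul1r.
  have lt_ip : (i - p < m - p)%N by have := ltn_ord i; lia.
  have -> : i = shift_ord (Ordinal lt_ip) by apply: val_inj => /=; lia.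
  by have /rowP/(_ j) := A0 (Ordinal lt_ip); rewrite !mxE => ->; rewrite mul0r.
by apply: leq_trans (mxrankM_maxl _ _) _; rewrite rank_pid_mx.
Qed.

End ColsubRank.

Section Semifactor.
Variables (F : fieldType) (k m n : nat) (M : aci F k m n) (S : {set 'I_n}).
Hypothesis sfS : semifactor M S.

(* rank <= p, the row count of the block A, since p + maxn m n = #|S| + m *)
Lemma semifactor_rank_colsub_le v :
  (\rank (colsub (enum_val : 'I_#|S| -> 'I_n) (completion M v)) + maxn m n
     <= #|S| + m)%N.
Proof.
have [R [p [le_pm [unitR [medium [zero _]]]]]] := sfS.
set Y := colsub _ _.
have <- : \rank (R *m Y) = \rank Y by rewrite (eqmxMfull _ _) // row_full_unit.
have -> : R *m Y = colsub (widen_ord (card_set_ord_le S))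
                     (completion (aci_transform R M (Q_F F S)) v).
  rewrite completion_transform mulmx_Q_F -colsub_comp mulmx_colsub.
  by apply: eq_colsub => j; rewrite /= col_order_widen.
suff le_rk_p : (\rank (colsub (widen_ord (card_set_ord_le S))
                (completion (aci_transform R M (Q_F F S)) v)) <= p)%N.
  by apply: leq_trans (leq_add le_rk_p (leqnn _)) _; lia.
apply: mxrank_le_zero_bottom_rows le_pm _ => i; apply/rowP => j.
have [c0 a0] := zero i j.
by rewrite mxE [X in X = _]mxE [RHS]mxE completion_entry_eq0.
Qed.

Lemma semifactor_colsub_compl_full : exists v,
  forall q (g : 'I_q -> 'I_n), injective g -> (forall j, g j \notin S) ->
  \rank (colsub g (completion M v)) = q.
Proof.
have [R [p [_ [_ [medium [_ [_ FC]]]]]]] := sfS.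
case: FC => [[[v rkC] _] | m_p0]; last first.
  exists (fun=> 0) => -[|q] g _ gS.
    by apply/eqP; rewrite -leqn0 rank_leq_col.
  have Sc0 : #|~: S| = 0%N by have := cardsC S; rewrite card_ord; lia.
  by have := gS ord0; rewrite -in_setC (card0_eq Sc0).
exists v => q g inj_g gS.
pose c := col_order S \o @shift_ord #|S| n.
have full_c : row_full (colsub c (completion M v)).
  rewrite /row_full eqn_leq rank_leq_col -{1}rkC completion_sub.
  rewrite completion_transform mulmx_Q_F mxsubrc -colsub_comp -mulmx_colsub.
  exact: leq_trans (mxrankS (rowsub_sub _ _)) (mxrankM_maxr _ _).
have [h hh] := fin_all_exists (fun j => col_order_shift_onto (gS j)).
have inj_h : injective h by move=> j1 j2 e; apply: inj_g; rewrite -!hh e.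
rewrite (eq_colsub (c \o h)) => [|j]; last exact: esym (hh j).
by rewrite colsub_comp mxrank_colsub_full.
Qed.

End Semifactor.

Theorem lemma5p2 (F : fieldType) (k m n : nat) (M : aci F k m n) :
  is_aci M -> (m < n)%N ->
  forall S1 S2 : {set 'I_n},
    semifactor M S1 -> semifactor M S2 -> ~~ [disjoint S1 & S2].
Proof.
move=> _ lt_mn S1 S2 sf1 sf2; apply/negP => dis.
have [v full1] := semifactor_colsub_compl_full sf1.
have := semifactor_rank_colsub_le sf2 v.
rewrite (full1 _ _ (@enum_val_inj _ S2)) => [|j]; last first.
  by rewrite (disjointFl dis) ?enum_valP.
by rewrite (maxn_idPr (ltnW lt_mn)) leq_add2l leqNgt lt_mn.
Qed.
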